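(* Let $R$ be a finite commutative ring with unity such that $\Gamma_E(R)$ is a fan graph with at least four vertices. Then $R$ is a local ring.
   Context: For $x,y\in R$ write $x\sim y$ iff $\operatorname{ann}(x)=\operatorname{ann}(y)$; $[x]$ denotes the equivalence class of $x$. Let $Z^*(R)$ be the set of nonzero zero divisors of $R$. The graph $\Gamma_E(R)$ is the simple graph whose vertices are the classes $[x]$ with $x\in Z^*(R)$, two distinct vertices $[x],[y]$ being adjacent iff $xy=0$. A fan graph is a complete bipartite graph $K_{n,1}$ with $n\in\mathbb N\cup\{\infty\}$. *)

From mathcomp Require Import all_boot all_algebra.
Set Implicit Arguments. Unset Strict Implicit. Unset Printing Implicit Defensive.
Import GRing.Theory.
Local Open Scope ring_scope.

Definition ann (R : finComNzRingType) (x : R) : {set R} := [set y | x * y == 0].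

Definition zdivs (R : finComNzRingType) : {set R} :=
  [set x : R | (x != 0) && [exists y : R, (y != 0) && (x * y == 0)]].

Definition eclass (R : finComNzRingType) (x : R) : {set R} :=
  [set y : R | ann y == ann x].

Definition GammaE_V (R : finComNzRingType) : {set {set R}} :=
  [set eclass x | x in zdivs R].

(* Adjacency: distinct vertices [x],[y] adjacent iff xy = 0
   (independent of the representatives). *)
Definition GammaE_adj (R : finComNzRingType) (C D : {set R}) : bool :=
  (C != D) && [exists x in C, exists y in D, x * y == 0].

(* Gamma_E(R) is a fan graph K_{n,1}: some vertex c (the centre) such that two
   distinct vertices are adjacent iff one of them is c. *)
Definition is_fan_graph (R : finComNzRingType) : Prop :=
  exists2 c, c \in GammaE_V R &
    forall u v, u \in GammaE_V R -> v \in GammaE_V R -> u != v ->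
      GammaE_adj u v = (u == c) || (v == c).

Definition is_ideal (R : finComNzRingType) (I : {set R}) : bool :=
  [&& (0 : R) \in I,
      [forall x in I, forall y in I, x + y \in I] &
      [forall r : R, forall x in I, r * x \in I]].

Definition is_maximal_ideal (R : finComNzRingType) (M : {set R}) : bool :=
  [&& is_ideal M, M != [set: R] &
      [forall J : {set R}, (is_ideal J && (M \subset J)) ==> (J == M) || (J == [set: R])]].

Definition is_local_ring (R : finComNzRingType) : Prop :=
  exists M : {set R}, is_maximal_ideal M /\
    forall N : {set R}, is_maximal_ideal N -> N = M.

From mathcomp Require Import all_boot all_algebra.
Set Implicit Arguments. Unset Strict Implicit. Unset Printing Implicit Defensive.
Import GRing.Theory.
Local Open Scope ring_scope.

(* If R has no idempotent other than 0 and 1, every non-unit of the finite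
   ring R is nilpotent (some power of it is idempotent), so the non-units form
   the unique maximal ideal.  Otherwise take an idempotent e <> 0, 1 and
   f := 1 - e: [e] and [f] are adjacent, so one of them, say [e], is the centre
   of the fan.  Then every zero divisor x has ann x = ann e or ann x = ann f,
   so Gamma_E(R) has only two vertices.  Indeed, if e x <> 0 then e x is
   adjacent to the non-centre [f], forcing ann (e x) = ann e, and any y <> 0
   with x y = 0 satisfies e y = 0, so [x] and [y] are adjacent non-centre
   vertices; if e x = 0, apply the same argument to e + x. *)

Section FiniteRing.
Variable R : finComNzRingType.

Definition invertible (x : R) : bool := [exists y, x * y == 1].

Lemma invertibleP (x : R) : reflect (exists y, x * y = 1) (invertible x).
Proof.
by apply: (iffP existsP) => -[y xy]; exists y; apply/eqP.
Qed.

Lemma invertibleMl (x y : R) : invertible (x * y) -> invertible x.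
Proof.
by case/invertibleP=> z xyz; apply/invertibleP; exists (y * z); rewrite mulrA.
Qed.

Lemma nilpotent_invertible1B (x : R) n : x ^+ n = 0 -> invertible (1 - x).
Proof.
move=> xn0; apply/invertibleP; exists (\sum_(i < n) 1 ^+ (n.-1 - i) * x ^+ i).
by rewrite -subrXX xn0 expr1n subr0.
Qed.

Lemma ideal_invertible_setT (J : {set R}) (u : R) :
  is_ideal J -> u \in J -> invertible u -> J = [set: R].
Proof.
case/and3P=> _ _ /forallP Jmul uJ /invertibleP[v uv].
apply/setP => z; rewrite inE.
have /forall_inP/(_ u uJ) := Jmul (z * v).
by rewrite -mulrA [v * u]mulrC uv mulr1.
Qed.

Lemma idempotent_power (x : R) : exists2 n, (0 < n)%N & x ^+ n * x ^+ n = x ^+ n.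
Proof.
have /injectivePn[i0 [j0 ij0 xij0]] :
    ~~ injectiveb (fun i : 'I_#|R|.+1 => x ^+ i).
  by apply/injectiveP => /leq_card; rewrite card_ord ltnn.
have [i [j [ltij xij]]] : exists i j, (i < j)%N /\ x ^+ i = x ^+ j.
  case: (ltngtP i0 j0) => [lt|lt|/val_inj eq]; last by rewrite eq eqxx in ij0.
  - by exists i0, j0.
  - by exists j0, i0.
set p := (j - i)%N.
have xp t : (i <= t)%N -> x ^+ (t + p) = x ^+ t.
  by move=> it; rewrite -(subnK it) -addnA subnKC 1?ltnW // exprD -xij -exprD.
have xkp k t : (i <= t)%N -> x ^+ (t + k * p) = x ^+ t.
  move=> it; elim: k => [|k IHk]; first by rewrite addn0.
  by rewrite mulSn addnCA addnC xp ?IHk // (leq_trans it) ?leq_addr.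
have p_gt0 : (0 < p)%N by rewrite subn_gt0.
exists (i.+1 * p)%N; first by rewrite muln_gt0.
by rewrite -exprD xkp // mulSn (leq_trans (leq_pmulr _ p_gt0)) ?leq_addl.
Qed.

Section NoNontrivialIdempotent.
Hypothesis idempotent_trivial : forall e : R, e * e = e -> e = 0 \/ e = 1.

Lemma nonunit_nilpotent (x : R) : ~~ invertible x -> exists n, x ^+ n = 0.
Proof.
move=> xN; have [n n_gt0 xn] := idempotent_power x.
case: (idempotent_trivial xn) => [|xn1]; first by exists n.
case/negP: xN; apply/invertibleP; exists (x ^+ n.-1).
by rewrite -exprS prednK.
Qed.

Lemma nonunitD (x y : R) :
  ~~ invertible x -> ~~ invertible y -> ~~ invertible (x + y).
Proof.
move=> xN yN; apply/invertibleP => -[v xyv].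
have [n xvn] : exists n, (x * v) ^+ n = 0.
  by apply: nonunit_nilpotent; apply: contra xN => /invertibleMl.
case/negP: yN; apply: (@invertibleMl _ v).
have -> : y * v = 1 - x * v by rewrite -xyv mulrDl addrAC subrr add0r.
exact: nilpotent_invertible1B xvn.
Qed.

Lemma local_of_idempotent_trivial : is_local_ring R.
Proof.
set M := [set x : R | ~~ invertible x].
have M_ideal : is_ideal M.
  apply/and3P; split.
  - rewrite inE; apply/negP => /invertibleP[y].
    by rewrite mul0r => /esym/eqP; rewrite oner_eq0.
  - apply/forall_inP => x xM; apply/forall_inP => y yM.
    by move: xM yM; rewrite !inE; apply: nonunitD.
  - apply/forallP => r; apply/forall_inP => x; rewrite !inE.
    by apply: contra; rewrite mulrC => /invertibleMl.
have proper_subM J : is_ideal J -> J != [set: R] -> J \subset M.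
  move=> J_ideal JT; apply/subsetP => u uJ; rewrite inE.
  by apply: contra JT => uU; rewrite (ideal_invertible_setT J_ideal uJ uU).
have M1 : 1 \notin M.
  by rewrite inE negbK; apply/invertibleP; exists 1; rewrite mulr1.
have MT : M != [set: R] by apply: contraNneq M1 => ->; rewrite inE.
have M_max : is_maximal_ideal M.
  apply/and3P; split => //; apply/forallP => J.
  apply/implyP => /andP[J_ideal MJ].
  have [->|JT] := eqVneq J [set: R]; first by rewrite orbT.
  by rewrite eqEsubset MJ proper_subM.
exists M; split => // N /and3P[N_ideal NT /forallP Nmax].
move: (Nmax M); rewrite M_ideal proper_subM //= => /orP[/eqP-> //|/eqP MT'].
by rewrite MT' eqxx in MT.
Qed.

End NoNontrivialIdempotent.

Lemma annE (x y : R) : (y \in ann x) = (x * y == 0).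
Proof. by rewrite inE. Qed.

Lemma mem_ann (x y : R) : x * y = 0 -> y \in ann x.
Proof. by rewrite annE => ->. Qed.

Lemma eclass_eq (x y : R) : (eclass x == eclass y) = (ann x == ann y).
Proof.
apply/eqP/eqP => [exy|axy]; last by apply/setP => z; rewrite !inE axy.
have : x \in eclass y by rewrite -exy inE.
by rewrite inE => /eqP.
Qed.

Lemma zdivsI (x y : R) : x != 0 -> y != 0 -> x * y = 0 -> x \in zdivs R.
Proof.
by move=> x0 y0 xy; rewrite inE x0; apply/existsP; exists y; rewrite y0 xy eqxx.
Qed.

Lemma zdivsP (x : R) :
  reflect (x != 0 /\ exists2 y, y != 0 & x * y = 0) (x \in zdivs R).
Proof.
apply: (iffP idP) => [|[x0 [y y0 xy]]]; last exact: zdivsI y0 xy.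
by rewrite inE => /andP[x0 /existsP[y /andP[y0 /eqP xy]]]; split=> //; exists y.
Qed.

Section Idempotent.
Variable e : R.
Hypothesis ee : e * e = e.

Lemma mulr_idemBr : e * (1 - e) = 0.
Proof. by rewrite mulrBr mulr1 ee subrr. Qed.

Lemma idemB : (1 - e) * (1 - e) = 1 - e.
Proof. by rewrite mulrBl mul1r mulr_idemBr subr0. Qed.

Lemma ann_idem_neqB : 1 - e != 0 -> ann e != ann (1 - e).
Proof.
move=> f0; apply/eqP => ann_ef.
have := mem_ann mulr_idemBr.
by rewrite ann_ef annE idemB (negbTE f0).
Qed.

End Idempotent.

Section FanGraph.
Variable c : {set R}.
Hypothesis fan : forall u v, u \in GammaE_V R -> v \in GammaE_V R -> u != v ->
  GammaE_adj u v = (u == c) || (v == c).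

Lemma fan_adj_centre (x y : R) : x \in zdivs R -> y \in zdivs R ->
  ann x != ann y -> x * y = 0 -> (eclass x == c) || (eclass y == c).
Proof.
move=> xZ yZ axy xy; rewrite -fan ?imset_f ?eclass_eq //.
rewrite /GammaE_adj eclass_eq axy; apply/existsP; exists x; rewrite inE eqxx.
by apply/existsP; exists y; rewrite inE eqxx xy eqxx.
Qed.

Variable e : R.
Hypotheses (ee : e * e = e) (e0 : e != 0) (f0 : 1 - e != 0).
Hypothesis centre_e : c = eclass e.
Let f := 1 - e.
Let ef : e * f = 0 := mulr_idemBr ee.
Let fe : f * e = 0 := etrans (mulrC f e) ef.

Lemma fan_idem_mul_eq0 (x : R) : x \in zdivs R ->
  ann x != ann e -> ann x != ann f -> e * x = 0.
Proof.
move=> xZ axe axf; have [//|ex0] := eqVneq (e * x) 0; exfalso.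
have fZ : f \in zdivs R := zdivsI f0 e0 fe.
have exZ : e * x \in zdivs R by apply: (zdivsI ex0 f0); rewrite mulrAC ef mul0r.
have aexf : ann (e * x) != ann f.
  apply/eqP => aexf; have := mem_ann fe.
  by rewrite -aexf annE mulrC mulrA ee (negbTE ex0).
have fC : (eclass f == c) = false.
  by rewrite centre_e eclass_eq eq_sym (negbTE (ann_idem_neqB ee f0)).
have /eqP aex : ann (e * x) == ann e.
  have := fan_adj_centre exZ fZ aexf; rewrite fC orbF centre_e eclass_eq.
  by apply; rewrite mulrAC ef mul0r.
have [_ [y y0 xy]] := zdivsP _ xZ.
have ey : e * y = 0 by apply/eqP; rewrite -annE -aex annE -mulrA xy mulr0.
have yZ : y \in zdivs R by apply: (zdivsI y0 e0); rewrite mulrC.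
have axy : ann x != ann y.
  apply/eqP => axy; have := mem_ann (etrans (mulrC y e) ey).
  by rewrite -axy annE mulrC (negbTE ex0).
have /eqP aye : ann y == ann e.
  move: (fan_adj_centre xZ yZ axy xy).
  by rewrite centre_e !eclass_eq (negbTE axe).
have := mem_ann ef; rewrite -aye annE.
by rewrite mulrBr mulr1 mulrC ey subr0 (negbTE y0).
Qed.

Lemma fan_ann_idem (x : R) :
  x \in zdivs R -> (ann x == ann e) || (ann x == ann f).
Proof.
move=> xZ; apply/negPn/negP; rewrite negb_or => /andP[axe axf].
have ex := fan_idem_mul_eq0 xZ axe axf.
have [x0 _] := zdivsP _ xZ.
have [y xy fy] : exists2 y, x * y = 0 & f * y != 0.
  have /subsetPn[y] : ~~ (ann x \subset ann f).
    apply: contra axf => sxf; rewrite eqEsubset sxf.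
    apply/subsetP => z; rewrite !annE => /eqP fz.
    rewrite -[z](mul1r z) -(subrK e 1) mulrDl -/f fz add0r.
    by rewrite mulrA [x * e]mulrC ex mul0r.
  by rewrite !annE => /eqP; exists y.
set w := e + x.
have ew : e * w = e by rewrite mulrDr ee ex addr0.
have w0 : w != 0 by apply: contra_neq e0 => w0; rewrite -ew w0 mulr0.
have wZ : w \in zdivs R.
  apply: (zdivsI w0 fy).
  by rewrite mulrDl mulrA ef mul0r add0r mulrCA xy mulr0.
suff : e * w = 0 by rewrite ew; apply/eqP.
apply: fan_idem_mul_eq0 => //; apply/eqP => aw.
- have := mem_ann ef; rewrite -aw annE mulrDl ef add0r.
  by rewrite mulrBr mulr1 mulrC ex subr0 (negbTE x0).
- by have := mem_ann fe; rewrite -aw annE mulrC ew (negbTE e0).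
Qed.

Lemma fan_vertices_idem : GammaE_V R \subset [set eclass e; eclass (1 - e)].
Proof.
apply/subsetP => _ /imsetP[x xZ ->]; rewrite !inE !eclass_eq.
exact: fan_ann_idem.
Qed.

End FanGraph.
End FiniteRing.

Local Close Scope ring_scope.

Theorem corollary2p5 (R : finComNzRingType) :
  is_fan_graph R -> 4 <= #|GammaE_V R| -> is_local_ring R.
Proof.
Local Open Scope ring_scope.
move=> [c _ fan] V_ge4.
have [/existsP[e /and3P[/eqP ee e0 e1]]|] :=
  boolP [exists e : R, [&& e * e == e, e != 0 & e != 1]]; last first.
  move=> /existsPn noidem; apply: local_of_idempotent_trivial => e ee.
  move: (noidem e); rewrite ee eqxx !negb_and !negbK /=.
  by case/orP=> /eqP; [left|right].
have centre_not_idem g :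
    g * g = g -> g != 0 -> 1 - g != 0 -> eclass g = c -> False.
  move=> gg g0 gB0 cg.
  have := subset_leq_card (fan_vertices_idem fan gg g0 gB0 (esym cg)).
  by rewrite cards2 => /(leq_trans V_ge4); case: (_ != _).
have f0 : 1 - e != 0 by rewrite subr_eq0 eq_sym.
have eZ : e \in zdivs R by apply: (zdivsI e0 f0); rewrite mulr_idemBr.
have fZ : 1 - e \in zdivs R by apply: (zdivsI f0 e0); rewrite mulrC mulr_idemBr.
exfalso.
case/orP: (fan_adj_centre fan eZ fZ (ann_idem_neqB ee f0) (mulr_idemBr ee)).
  by move=> /eqP; apply: centre_not_idem.
by move=> /eqP; apply: centre_not_idem; rewrite ?(idemB ee) ?subKr.
Qed.
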